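(* Let $G=\mathrm{SL}(3,\mathbb R)$, $P$ the upper triangular matrices in $G$, $\mathfrak n$ the strictly lower triangular $3\times3$ real matrices, and let $E_{ij}$ be the matrix units. For $X\in\mathfrak n$ consider the distinguished curve $t\mapsto\exp(tX)P$. Then this curve admits a projective reparameterisation for each of $X=E_{21}$, $X=E_{32}$, $X=E_{21}+E_{32}$, $X=E_{21}+E_{31}$, $X=E_{31}+E_{32}$, $X=E_{31}$, whereas for $X=E_{21}+xE_{31}+E_{32}$ with $x\neq0$ it admits only affine reparameterisations (its reparameterisations as a distinguished curve with origin at $eP$ are only $t\mapsto at$, $a\ne0$). In particular $t\mapsto\exp\big(t(E_{21}+E_{31}+E_{32})\big)P$ admits only affine reparameterisations.
   Context: A distinguished curve in $G/P$ is $t\mapsto q\exp(tY)P$ with $q\in P$, $0\ne Y\in\mathfrak n$. The curve $\gamma(t)=p\exp(tX)P$ admits a projective reparameterisation if there exist $q\in P$, $Y\in\mathfrak n$ with $p\exp(tX)P=q\exp(\tfrac{t}{t+1}Y)P$ for all $t$ near $0$; otherwise its only reparameterisations $\varphi$ with $\varphi(0)=0$ preserving distinguishedness are $t\mapsto at$. *)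

From HB Require Import structures.
From mathcomp Require Import all_boot all_order all_algebra.
From mathcomp Require Import reals.
Set Implicit Arguments. Unset Strict Implicit. Unset Printing Implicit Defensive.
Import Order.TTheory GRing.Theory Num.Theory.
Local Open Scope ring_scope.

Section Defs.
Variable R : realType.

Definition in_P (A : 'M[R]_3) : Prop :=
  \det A = 1 /\ (forall i j : 'I_3, (j < i)%N -> A i j = 0).

Definition in_n (X : 'M[R]_3) : Prop :=
  forall i j : 'I_3, (i <= j)%N -> X i j = 0.

(* Matrix exponential, written out for elements of n: such X satisfy X^3 = 0,
   so exp X = 1 + X + X^2/2.  Only ever applied to elements of n. *)
Definition exp_n (X : 'M[R]_3) : 'M[R]_3 := 1%:M + X + 2^-1 *: (X *m X).

Definition cosetEq (g h : 'M[R]_3) : Prop := in_P (invmx h *m g).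

(* matrix unit E_ij (1-indexed, as in the paper) *)
Definition Eu (i j : nat) : 'M[R]_3 := delta_mx (inord i.-1) (inord j.-1).

Definition admits_proj_reparam (X : 'M[R]_3) : Prop :=
  exists q : 'M[R]_3, in_P q /\ exists Y : 'M[R]_3, in_n Y /\
    exists eps : R, 0 < eps /\ forall t : R, `|t| < eps ->
      cosetEq (exp_n (t *: X)) (q *m exp_n ((t / (t + 1)) *: Y)).

Definition distinguished_reparam (X : 'M[R]_3) (phi : R -> R) : Prop :=
  exists q : 'M[R]_3, in_P q /\ exists Y : 'M[R]_3, in_n Y /\ Y <> 0 /\
    exists eps : R, 0 < eps /\ forall t : R, `|t| < eps ->
      cosetEq (exp_n (t *: X)) (q *m exp_n (phi t *: Y)).

End Defs.

(* For each of the six listed X one can take Y = X: an explicit factorisation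
   q exp((t/(t+1)) X) p(t) = exp(t X) with q and p(t) upper triangular exhibits
   the projective parameter.

   For X = E21 + x E31 + E32, write s = phi t and let u, v be the first two
   columns of q^-1 exp(t X).  The coset condition says that
   exp(-s Y) q^-1 exp(t X) is upper triangular, i.e. u spans the line and
   (u, v) the plane of the flag exp(s Y) P.  Eliminating s from its three
   subdiagonal entries leaves two relations between the 2 x 2 minors of (u v);
   they are polynomial in t and hold for all small t > 0, hence identically.
   The first one makes the first entry of u proportional to the square of an
   affine function of t; substituted into the second, it leaves
   x E (D + E (x + t/2)/2) = 0, where D, E are the entries (2,2), (2,3) of q^-1.
   As x != 0 this forces E = 0, so the first entry of u is constant and the
   second one linear, and the line condition makes s linear in t, which
   t/(t+1) is not. *)

From HB Require Import structures.
From mathcomp Require Import all_boot all_order all_algebra.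
From mathcomp Require Import reals.
From mathcomp Require Import ring lra.
Import Order.TTheory GRing.Theory Num.Theory.
Set Implicit Arguments. Unset Strict Implicit. Unset Printing Implicit Defensive.
Local Open Scope ring_scope.

Ltac by_entries :=
  apply/matrixP => - [[|[|[|?]]] ?] [[|[|[|?]]] ?] //;
  by rewrite !mxE /eq_op /= ?inordK.

Section Matrix3.
Variable R : comPzRingType.

Definition mk3 (a b c d e f g h k : R) : 'M[R]_3 :=
  \matrix_(i < 3, j < 3) nth 0 (nth [::] [:: [:: a; b; c]; [:: d; e; f]; [:: g; h; k]] i) j.

Definition i0 : 'I_3 := Ordinal (isT : (0 < 3)%N).
Definition i1 : 'I_3 := Ordinal (isT : (1 < 3)%N).
Definition i2 : 'I_3 := Ordinal (isT : (2 < 3)%N).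

Lemma ord3P (i : 'I_3) : [\/ i = i0, i = i1 | i = i2].
Proof.
by case: i => [[|[|[|m]]] h]; [apply: Or31|apply: Or32|apply: Or33|] => //;
  apply: val_inj.
Qed.

Lemma mk3E (A : 'M[R]_3) :
  A = mk3 (A i0 i0) (A i0 i1) (A i0 i2) (A i1 i0) (A i1 i1) (A i1 i2)
          (A i2 i0) (A i2 i1) (A i2 i2).
Proof.
apply/matrixP => i j; rewrite mxE.
by case: (ord3P i) => ->; case: (ord3P j) => ->.
Qed.

Lemma mul_mk3 a b c d e f g h k a' b' c' d' e' f' g' h' k' :
  mk3 a b c d e f g h k *m mk3 a' b' c' d' e' f' g' h' k' =
  mk3 (a*a' + b*d' + c*g') (a*b' + b*e' + c*h') (a*c' + b*f' + c*k')
      (d*a' + e*d' + f*g') (d*b' + e*e' + f*h') (d*c' + e*f' + f*k')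
      (g*a' + h*d' + k*g') (g*b' + h*e' + k*h') (g*c' + h*f' + k*k').
Proof.
apply/matrixP => i j; rewrite !mxE !big_ord_recr big_ord0 /= !mxE /= add0r.
by case: (ord3P i) => ->; case: (ord3P j) => ->.
Qed.

Lemma add_mk3 a b c d e f g h k a' b' c' d' e' f' g' h' k' :
  mk3 a b c d e f g h k + mk3 a' b' c' d' e' f' g' h' k' =
  mk3 (a+a') (b+b') (c+c') (d+d') (e+e') (f+f') (g+g') (h+h') (k+k').
Proof. by_entries. Qed.

Lemma scale_mk3 r a b c d e f g h k :
  r *: mk3 a b c d e f g h k = mk3 (r*a) (r*b) (r*c) (r*d) (r*e) (r*f) (r*g) (r*h) (r*k).
Proof. by_entries. Qed.

Lemma one_mk3 : (1%:M : 'M[R]_3) = mk3 1 0 0 0 1 0 0 0 1.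
Proof. by_entries. Qed.

Lemma tr_mk3 a b c d e f g h k : (mk3 a b c d e f g h k)^T = mk3 a d g b e h c f k.
Proof. by_entries. Qed.

Lemma mk3_congr a b c d e f g h k a' b' c' d' e' f' g' h' k' :
  a = a' -> b = b' -> c = c' -> d = d' -> e = e' -> f = f' -> g = g' -> h = h' -> k = k' ->
  mk3 a b c d e f g h k = mk3 a' b' c' d' e' f' g' h' k'.
Proof. by move=> -> -> -> -> -> -> -> -> ->. Qed.

Lemma det_mk3_lower a d e g h k : \det (mk3 a 0 0 d e 0 g h k) = a * e * k.
Proof.
rewrite det_trig; last by apply/is_trig_mxP => i j;
  case: (ord3P i) => ->; case: (ord3P j) => -> //= _; rewrite mxE.
by rewrite !big_ord_recr big_ord0 /= !mxE /= mul1r.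
Qed.

Lemma det_mk3_upper a b c e f k : \det (mk3 a b c 0 e f 0 0 k) = a * e * k.
Proof. by rewrite -det_tr tr_mk3 det_mk3_lower. Qed.

End Matrix3.

Section VanishingOnInterval.
Variables (R : realFieldType) (eps : R).
Hypothesis eps_gt0 : 0 < eps.

Lemma Poly_eq0_on_interval (cs : seq R) :
  (forall t, 0 < t < eps -> (Poly cs).[t] = 0) -> forall i, cs`_i = 0.
Proof.
move=> cs0 i; rewrite -coef_Poly.
set rs := mkseq (fun n => eps / n.+2%:R) (size (Poly cs)).
have in_interval n : 0 < eps / n.+2%:R < eps.
  have n2_gt1 : 1 < n.+2%:R :> R by rewrite ltr1n.
  by rewrite divr_gt0 ?ltr_pdivrMr ?ltr_pMr //; lra.
rewrite (@roots_geq_poly_eq0 _ (Poly cs) rs) ?coef0 ?size_mkseq //.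
  by apply/allP => _ /mapP[n _ ->]; apply/eqP/cs0.
rewrite map_inj_uniq ?iota_uniq // => m n /(mulfI (lt0r_neq0 eps_gt0)) /invr_inj.
by move/eqP; rewrite eqr_nat => /eqP [].
Qed.

Lemma cubic_eq0_on_interval (c0 c1 c2 c3 : R) :
  (forall t, 0 < t < eps -> c0 + c1 * t + c2 * t ^+ 2 + c3 * t ^+ 3 = 0) ->
  [/\ c0 = 0, c1 = 0, c2 = 0 & c3 = 0].
Proof.
move=> H; have := @Poly_eq0_on_interval [:: c0; c1; c2; c3].
have P0 t : 0 < t < eps -> (Poly [:: c0; c1; c2; c3]).[t] = 0.
  by move=> /H <-; rewrite horner_Poly /=; ring.
by move=> /(_ P0) cs0; split; [exact: cs0 0%N | exact: cs0 1%N | exact: cs0 2%N | exact: cs0 3%N].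
Qed.

Lemma linear_eq0_on_interval (c0 c1 : R) :
  (forall t, 0 < t < eps -> c0 + c1 * t = 0) -> c0 = 0 /\ c1 = 0.
Proof.
move=> H; have [] // := @cubic_eq0_on_interval c0 c1 0 0.
by move=> t /H; rewrite !mul0r !addr0.
Qed.

Lemma mobius_not_linear_on_interval (lam : R) :
  ~ (forall t, 0 < t < eps -> t / (t + 1) = lam * t).
Proof.
move=> mobius_lin.
have [lam1 lam0] : lam - 1 = 0 /\ lam = 0.
  apply: linear_eq0_on_interval => t /[dup] /mobius_lin mob /andP[t_gt0 _].
  have t1 : t + 1 != 0 by apply: lt0r_neq0; rewrite ltr_wpDr // ltW.
  apply: (mulfI (lt0r_neq0 t_gt0)); rewrite mulr0.
  transitivity (lam * t * (t + 1) - t); first by ring.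
  by rewrite -mob divfK // subrr.
by move: lam1; rewrite lam0 sub0r => /eqP; rewrite oppr_eq0 oner_eq0.
Qed.

End VanishingOnInterval.

Lemma flag_eqs_minors (R : numFieldType) (a b c s u1 u2 u3 v1 v2 v3 : R) :
  - (s * a) * u1 + u2 = 0 ->
  (- (s * c) + s ^+ 2 * (a * b) / 2) * u1 - s * b * u2 + u3 = 0 ->
  (- (s * c) + s ^+ 2 * (a * b) / 2) * v1 - s * b * v2 + v3 = 0 ->
  2 * a * u1 * u3 = u2 * (2 * c * u1 + b * u2) /\
  a * u1 * (u1 * v3 - u3 * v1) = b * u2 * (u1 * v2 - u2 * v1).
Proof.
move=> e1 e2 e3.
have u2E : u2 = s * a * u1 by rewrite -(subr0 u2) -e1; ring.
have -> : u3 = (s * c - s ^+ 2 * (a * b) / 2) * u1 + s * b * u2.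
  by rewrite -(subr0 u3) -e2; ring.
have -> : v3 = (s * c - s ^+ 2 * (a * b) / 2) * v1 + s * b * v2.
  by rewrite -(subr0 v3) -e3; ring.
rewrite u2E.
by split; field.
Qed.

Module GenericCurve.
Section Rigidity.
Variables (R : realFieldType) (x A B C D E F a b c eps : R) (s : R -> R).
Hypotheses (x_neq0 : x != 0) (A_neq0 : A != 0) (D_neq0 : D != 0) (F_neq0 : F != 0).
Hypothesis eps_gt0 : 0 < eps.

Local Notation u1 t := (A + B * t + C * (x * t + t ^+ 2 / 2)).
Local Notation u2 t := (D * t + E * (x * t + t ^+ 2 / 2)).
Local Notation u3 t := (F * (x * t + t ^+ 2 / 2)).
Local Notation v1 t := (B + C * t).
Local Notation v2 t := (D + E * t).
Local Notation v3 t := (F * t).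
Local Notation l31 t := (- (s t * c) + s t ^+ 2 * (a * b) / 2).

(* [A], ..., [F] are the entries of the upper triangular matrix q^-1, and
   [a], [c], [b] the entries (2,1), (3,1), (3,2) of Y.  The [u_ t] and [v_ t]
   are the first two columns of q^-1 exp(t X) for X = E21 + x E31 + E32,
   and [flag_eqs] says that the subdiagonal entries of
   exp(- s t Y) q^-1 exp(t X) vanish. *)
Hypothesis flag_eqs : forall t, `|t| < eps ->
  [/\ - (s t * a) * u1 t + u2 t = 0,
      l31 t * u1 t - s t * b * u2 t + u3 t = 0 &
      l31 t * v1 t - s t * b * v2 t + v3 t = 0].

Local Notation n0 := (D + E * x).
Local Notation N t := (D + E * (x + t / 2)).
Local Notation kappa := (a * F - c * E).
Local Notation delta := (a * F * x - c * n0).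

Lemma u1_neq0 t : `|t| < eps -> u1 t != 0.
Proof.
move=> /flag_eqs[e1 e2 _]; apply/eqP => u10.
have u20 : u2 t = 0 by move: e1; rewrite u10 mulr0 add0r.
have w0 : x * t + t ^+ 2 / 2 = 0.
  move: e2; rewrite u10 u20 !mulr0 subr0 add0r => /eqP.
  by rewrite mulf_eq0 (negbTE F_neq0) => /eqP.
have t0 : t = 0.
  by move: u20; rewrite w0 mulr0 addr0 => /eqP; rewrite mulf_eq0 (negbTE D_neq0) => /eqP.
by move: u10; rewrite t0 expr0n /= !(mul0r, mulr0, addr0) => /eqP; rewrite (negbTE A_neq0).
Qed.

Lemma a_neq0 : a != 0.
Proof.
apply/eqP => a0.
have [n00 E0] : n0 = 0 /\ E / 2 = 0.
  apply: (linear_eq0_on_interval eps_gt0) => t /andP[t_gt0 t_lt].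
  have /flag_eqs[e1 _ _] : `|t| < eps by rewrite gtr0_norm.
  move: e1; rewrite a0 mulr0 oppr0 mul0r add0r => e1.
  by apply: (mulfI (lt0r_neq0 t_gt0)); rewrite mulr0 -[RHS]e1; ring.
have E00 : E = 0 by move/eqP: E0; rewrite mulf_eq0 invr_eq0 pnatr_eq0 orbF => /eqP.
by move/eqP: n00; rewrite E00 mul0r addr0 (negbTE D_neq0).
Qed.

Lemma first_column_relations :
  [/\ a * F * x = c * n0,
      forall t, kappa * u1 t = b * N t ^+ 2 &
      forall t, kappa * v1 t = b * E * (N t - E * x / 2)].
Proof.
have [c0 c1 c2 c3] : [/\ 2 * delta * A = 0,
    2 * delta * (B + C * x) + kappa * A - b * n0 ^+ 2 = 0,
    delta * C + kappa * (B + C * x) - b * E * n0 = 0 &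
    kappa * C / 2 - b * E ^+ 2 / 4 = 0].
  apply: (cubic_eq0_on_interval eps_gt0) => t /andP[t_gt0 t_lt].
  have /flag_eqs[e1 e2 e3] : `|t| < eps by rewrite gtr0_norm.
  have [I _] := flag_eqs_minors e1 e2 e3.
  apply: (mulfI (lt0r_neq0 t_gt0)); rewrite mulr0.
  by transitivity (2 * a * u1 t * u3 t - u2 t * (2 * c * u1 t + b * u2 t));
    [field | rewrite I subrr].
have delta0 : delta = 0.
  by move/eqP: c0; rewrite !mulf_eq0 pnatr_eq0 (negbTE A_neq0) orbF => /eqP.
rewrite delta0 !mulr0 !mul0r !add0r in c1 c2.
have kA := subr0_eq c1; have kB := subr0_eq c2.
have kC : kappa * C = b * E ^+ 2 / 2.
  have two_neq0 : 2 != 0 :> R by rewrite pnatr_eq0.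
  by apply: (mulIf (invr_neq0 two_neq0)); rewrite (subr0_eq c3); field.
split; first exact: subr0_eq delta0.
  move=> t; have -> : kappa * u1 t = kappa * A + kappa * (B + C * x) * t
      + kappa * C * t ^+ 2 / 2 by field.
  by rewrite kA kB kC; field.
move=> t; have -> : kappa * v1 t = kappa * (B + C * x) - kappa * C * x
    + kappa * C * t by ring.
by rewrite kB kC; field.
Qed.

Lemma n0_neq0 : n0 != 0.
Proof.
have [c_n0 _ _] := first_column_relations.
apply/eqP => n00; move/eqP: c_n0; rewrite n00 mulr0.
by rewrite !mulf_eq0 (negbTE a_neq0) (negbTE F_neq0) (negbTE x_neq0).
Qed.

Lemma c_eq : c = a * F * x / n0.
Proof.
by have [-> _ _] := first_column_relations; rewrite mulfK // n0_neq0.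
Qed.

Lemma kappa_neq0 : kappa != 0.
Proof.
rewrite {1}c_eq (_ : _ - _ = a * F * D / n0); last by field; exact: n0_neq0.
by rewrite !mulf_neq0 ?invr_eq0 ?n0_neq0 ?a_neq0.
Qed.

Lemma b_neq0 : b != 0.
Proof.
have [_ ku1 _] := first_column_relations.
apply/eqP => b0; have /eqP := ku1 0; rewrite b0 mul0r mulf_eq0 (negbTE kappa_neq0) /=.
by apply/negP; apply: u1_neq0; rewrite normr0.
Qed.

Lemma N_neq0 t : `|t| < eps -> N t != 0.
Proof.
have [_ ku1 _] := first_column_relations.
move=> ht; apply/eqP => N0; have /eqP := ku1 t; rewrite N0 expr0n mulr0 mulf_eq0.
by rewrite (negbTE kappa_neq0) (negbTE (u1_neq0 ht)).
Qed.

Lemma E_relation t : 0 < t < eps -> E * (D + E * x / 2) + E ^+ 2 / 4 * t = 0.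
Proof.
move=> /andP[t_gt0 t_lt]; have ht : `|t| < eps by rewrite gtr0_norm.
have [_ ku1 kv1] := first_column_relations.
have [e1 e2 e3] := flag_eqs ht; have [_ II] := flag_eqs_minors e1 e2 e3.
(* Scaled by kappa^2, the minor identity involves u1 and v1 only through
   kappa * u1 and kappa * v1, which first_column_relations express via N. *)
have Z : a * (kappa * u1 t) * ((kappa * u1 t) * v3 t - u3 t * (kappa * v1 t))
    - kappa * (b * u2 t * ((kappa * u1 t) * v2 t - u2 t * (kappa * v1 t))) = 0.
  transitivity (kappa ^+ 2 * (a * u1 t * (u1 t * v3 t - u3 t * v1 t)
                 - b * u2 t * (u1 t * v2 t - u2 t * v1 t))); first by ring.
  by rewrite II subrr mulr0.
rewrite ku1 kv1 in Z.
have nz : b ^+ 2 * t * N t ^+ 2 * (a * F * x) != 0.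
  by rewrite !mulf_neq0 ?expf_neq0 ?b_neq0 ?a_neq0 ?N_neq0 ?(lt0r_neq0 t_gt0).
apply/eqP; rewrite -(mulrI_eq0 _ (lregP nz)); apply/eqP.
by rewrite -[RHS]Z c_eq; field; exact: n0_neq0.
Qed.

Lemma E_eq0 : E = 0.
Proof.
have [_ /eqP] := linear_eq0_on_interval eps_gt0 E_relation.
by rewrite mulf_eq0 invr_eq0 pnatr_eq0 orbF expf_eq0 /= => /eqP.
Qed.

Lemma reparam_linear : exists lam, lam != 0 /\ forall t, `|t| < eps -> s t = lam * t.
Proof.
have [_ ku1 _] := first_column_relations.
exists (F / (b * D)); split; first by rewrite mulf_neq0 ?invr_neq0 ?mulf_neq0 ?b_neq0.
move=> t ht; have [e1 _ _] := flag_eqs ht.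
have au1 : a * F * u1 t = b * D ^+ 2.
  by move: (ku1 t); rewrite E_eq0 !(mulr0, mul0r, subr0, addr0).
apply: (mulIf (mulf_neq0 a_neq0 (u1_neq0 ht))).
rewrite (_ : s t * _ = D * t); last by rewrite -(subr0 (D * t)) -e1 E_eq0; ring.
rewrite (_ : F / (b * D) * t * _ = t / (b * D) * (a * F * u1 t)); last by ring.
by rewrite au1; field; rewrite b_neq0 D_neq0.
Qed.

End Rigidity.
End GenericCurve.

Section FlagCurves.
Variable R : realType.

Lemma Eu21E : Eu R 2 1 = mk3 0 0 0 1 0 0 0 0 0.
Proof. by_entries. Qed.

Lemma Eu31E : Eu R 3 1 = mk3 0 0 0 0 0 0 1 0 0.
Proof. by_entries. Qed.

Lemma Eu32E : Eu R 3 2 = mk3 0 0 0 0 0 0 0 1 0.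
Proof. by_entries. Qed.

Lemma in_P_mk3 (a b c e f k : R) : a * e * k = 1 -> in_P (mk3 a b c 0 e f 0 0 k).
Proof.
move=> aek; split; first by rewrite det_mk3_upper.
by move=> i j; case: (ord3P i) => ->; case: (ord3P j) => -> //= _; rewrite mxE.
Qed.

Lemma in_P_mk3E (q : 'M[R]_3) : in_P q ->
  exists a b c e f k, a * e * k = 1 /\ q = mk3 a b c 0 e f 0 0 k.
Proof.
move=> [detq lowq].
have qE : q = mk3 (q i0 i0) (q i0 i1) (q i0 i2) 0 (q i1 i1) (q i1 i2) 0 0 (q i2 i2).
  by rewrite {1}(mk3E q) (lowq i1 i0) ?(lowq i2 i0) ?(lowq i2 i1).
by do 6!eexists; split; [rewrite -detq [in RHS]qE det_mk3_upper | exact: qE].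
Qed.

Lemma in_n_mk3 (d g h : R) : in_n (mk3 0 0 0 d 0 0 g h 0).
Proof. by move=> i j; case: (ord3P i) => ->; case: (ord3P j) => -> //= _; rewrite mxE. Qed.

Lemma in_n_mk3E (Y : 'M[R]_3) : in_n Y -> exists d g h, Y = mk3 0 0 0 d 0 0 g h 0.
Proof.
move=> nY; exists (Y i1 i0), (Y i2 i0), (Y i2 i1).
rewrite {1}(mk3E Y) (nY i0 i0) ?(nY i0 i1) ?(nY i0 i2) ?(nY i1 i1) //.
by rewrite (nY i1 i2) ?(nY i2 i2).
Qed.

Lemma exp_n_mk3 (t d g h : R) :
  exp_n (t *: mk3 0 0 0 d 0 0 g h 0) =
  mk3 1 0 0 (t * d) 1 0 (t * g + (t * d) * (t * h) / 2) (t * h) 1.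
Proof.
rewrite /exp_n !(scale_mk3, mul_mk3, add_mk3, one_mk3).
by apply: mk3_congr; ring.
Qed.

Lemma det_exp_n (t : R) (X : 'M[R]_3) : in_n X -> \det (exp_n (t *: X)) = 1.
Proof. by move=> /in_n_mk3E[d [g [h ->]]]; rewrite exp_n_mk3 det_mk3_lower !mulr1. Qed.

Lemma exp_n_mulN (t : R) (Y : 'M[R]_3) : in_n Y ->
  exp_n (t *: Y) *m exp_n ((- t) *: Y) = 1%:M.
Proof.
move=> /in_n_mk3E[d [g [h ->]]]; rewrite !exp_n_mk3 mul_mk3 one_mk3.
by apply: mk3_congr; field.
Qed.

Lemma invmx_eq (A B : 'M[R]_3) : A *m B = 1%:M -> invmx A = B.
Proof.
move=> AB1; have [A_unit _] := mulmx1_unit AB1.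
by rewrite -[RHS](mulKmx A_unit) AB1 mulmx1.
Qed.

Lemma in_P_invmx (q : 'M[R]_3) : in_P q -> in_P (invmx q).
Proof.
move=> /in_P_mk3E[a [b [c [e [f [k [aek ->]]]]]]].
have : a * e * k != 0 by rewrite aek oner_neq0.
rewrite !mulf_eq0 !negb_or => /andP[/andP[a0 e0] k0].
rewrite (@invmx_eq _ (mk3 a^-1 (- (b / (a * e))) ((b * f - c * e) / (a * e * k))
                        0 e^-1 (- (f / (e * k))) 0 0 k^-1)).
  by apply: in_P_mk3; rewrite -!invfM aek invr1.
by rewrite mul_mk3 one_mk3; apply: mk3_congr; field; rewrite ?a0 ?e0 ?k0.
Qed.

Lemma cosetEq_mulmx (g h p : 'M[R]_3) :
  h *m p = g -> \det g != 0 -> in_P p -> cosetEq g h.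
Proof.
move=> <-; rewrite det_mulmx mulf_eq0 negb_or => /andP[deth _].
by rewrite /cosetEq mulKmx // unitmxE unitfE.
Qed.

Lemma cosetEq_translate (s : R) (q Y g : 'M[R]_3) : in_P q -> in_n Y ->
  cosetEq g (q *m exp_n (s *: Y)) -> in_P (exp_n ((- s) *: Y) *m (invmx q *m g)).
Proof.
move=> [detq _] nY.
rewrite /cosetEq (@invmx_eq _ (exp_n ((- s) *: Y) *m invmx q)) ?mulmxA //.
by rewrite -(mulmxA q) exp_n_mulN // mulmx1 mulmxV // unitmxE detq unitr1.
Qed.

Ltac mk3_normalize :=
  rewrite ?Eu21E ?Eu31E ?Eu32E ?add_mk3 ?(addr0, add0r).

Lemma proj_reparam_of_factorization (X q : 'M[R]_3) (p : R -> 'M[R]_3) :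
  in_n X -> in_P q ->
  (forall t, t + 1 != 0 ->
     in_P (p t) /\ q *m exp_n ((t / (t + 1)) *: X) *m p t = exp_n (t *: X)) ->
  admits_proj_reparam X.
Proof.
move=> nX Pq fact; exists q; split=> //; exists X; split=> //.
exists (1 / 2); split=> [|t]; first lra.
rewrite ltr_norml => /andP[t_gt t_lt].
have t1 : t + 1 != 0 by apply: lt0r_neq0; lra.
have [Pp qp] := fact t t1.
by apply: (cosetEq_mulmx qp); rewrite ?det_exp_n ?oner_neq0.
Qed.

Ltac verify_factorization :=
  first
  [ by mk3_normalize; exact: in_n_mk3
  | by apply: in_P_mk3; ring
  | let t := fresh "t" in let t1 := fresh "t1" in
    intros t t1; split;
    [ by apply: in_P_mk3; field; rewrite ?t1
    | by mk3_normalize; rewrite !exp_n_mk3 !mul_mk3; apply: mk3_congr;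
         field; rewrite ?t1 ] ].

Lemma proj_reparam_E21 : admits_proj_reparam (Eu R 2 1).
Proof.
apply: (proj_reparam_of_factorization (q := mk3 1 (-1) 0 0 1 0 0 0 1)
  (p := fun t : R => mk3 (t + 1) 1 0 0 (t + 1)^-1 0 0 0 1)); verify_factorization.
Qed.

Lemma proj_reparam_E32 : admits_proj_reparam (Eu R 3 2).
Proof.
apply: (proj_reparam_of_factorization (q := mk3 1 0 0 0 1 (-1) 0 0 1)
  (p := fun t : R => mk3 1 0 0 0 (t + 1) 1 0 0 (t + 1)^-1)); verify_factorization.
Qed.

Lemma proj_reparam_E21_E32 : admits_proj_reparam (Eu R 2 1 + Eu R 3 2).
Proof.
apply: (proj_reparam_of_factorization (q := mk3 1 (-2) 2 0 1 (-2) 0 0 1)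
  (p := fun t : R =>
          mk3 ((t + 1) ^+ 2) (2 * (t + 1)) 2 0 1 (2 / (t + 1)) 0 0 ((t + 1) ^- 2)));
  verify_factorization.
Qed.

Lemma proj_reparam_E21_E31 : admits_proj_reparam (Eu R 2 1 + Eu R 3 1).
Proof.
apply: (proj_reparam_of_factorization (q := mk3 1 0 (-1) 0 1 0 0 0 1)
  (p := fun t : R => mk3 (t + 1) 0 1 0 1 (- (t / (t + 1))) 0 0 (t + 1)^-1));
  verify_factorization.
Qed.

Lemma proj_reparam_E31_E32 : admits_proj_reparam (Eu R 3 1 + Eu R 3 2).
Proof.
apply: (proj_reparam_of_factorization (q := mk3 1 0 (-1) 0 1 0 0 0 1)
  (p := fun t : R => mk3 (t + 1) t 1 0 1 0 0 0 (t + 1)^-1)); verify_factorization.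
Qed.

Lemma proj_reparam_E31 : admits_proj_reparam (Eu R 3 1).
Proof.
apply: (proj_reparam_of_factorization (q := mk3 1 0 (-1) 0 1 0 0 0 1)
  (p := fun t : R => mk3 (t + 1) 0 1 0 1 0 0 0 (t + 1)^-1)); verify_factorization.
Qed.

Lemma generic_curve_reparam_linear (x eps : R) (q Y : 'M[R]_3) (s : R -> R) :
  x != 0 -> in_P q -> in_n Y -> 0 < eps ->
  (forall t, `|t| < eps ->
     cosetEq (exp_n (t *: (Eu R 2 1 + x *: Eu R 3 1 + Eu R 3 2)))
             (q *m exp_n (s t *: Y))) ->
  exists lam, lam != 0 /\ forall t, `|t| < eps -> s t = lam * t.
Proof.
move=> x0 Pq nY eps0 coset.
have XE : Eu R 2 1 + x *: Eu R 3 1 + Eu R 3 2 = mk3 0 0 0 1 0 0 x 1 0.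
  by rewrite Eu21E Eu31E Eu32E scale_mk3 !add_mk3; apply: mk3_congr; ring.
have [A [B [C [D [E [F [ADF qE]]]]]]] := in_P_mk3E (in_P_invmx Pq).
have [a [c [b YE]]] := in_n_mk3E nY.
have : A * D * F != 0 by rewrite ADF oner_neq0.
rewrite !mulf_eq0 !negb_or => /andP[/andP[A0 D0] F0].
apply: (@GenericCurve.reparam_linear _ x A B C D E F a b c eps s) => // t /coset.
move=> /(cosetEq_translate Pq nY); rewrite qE YE XE !exp_n_mk3 !mul_mk3 => -[_ low].
have := low i1 i0 isT; have := low i2 i0 isT; have := low i2 i1 isT.
rewrite !mxE /= => e3 e2 e1.
by split; [rewrite -[RHS]e1 | rewrite -[RHS]e2 | rewrite -[RHS]e3]; ring.
Qed.

End FlagCurves.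

Theorem mainTheorem5 (R : realType) :
  admits_proj_reparam (Eu R 2 1) /\
  admits_proj_reparam (Eu R 3 2) /\
  admits_proj_reparam (Eu R 2 1 + Eu R 3 2) /\
  admits_proj_reparam (Eu R 2 1 + Eu R 3 1) /\
  admits_proj_reparam (Eu R 3 1 + Eu R 3 2) /\
  admits_proj_reparam (Eu R 3 1) /\
  (forall x : R, x != 0 ->
        let X := Eu R 2 1 + x *: Eu R 3 1 + Eu R 3 2 in
        ~ admits_proj_reparam X /\
        (forall phi : R -> R, phi 0 = 0 -> distinguished_reparam X phi ->
           exists a : R, a != 0 /\ exists eps : R, 0 < eps /\
             forall t : R, `|t| < eps -> phi t = a * t)).
Proof.
do 6?split; [exact: proj_reparam_E21 | exact: proj_reparam_E32 | exact: proj_reparam_E21_E32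
  | exact: proj_reparam_E21_E31 | exact: proj_reparam_E31_E32 | exact: proj_reparam_E31 |].
move=> x x0 X; split.
  move=> [q [Pq [Y [nY [eps [eps0 coset]]]]]].
  have [lam [_ lin]] := generic_curve_reparam_linear x0 Pq nY eps0 coset.
  apply: (mobius_not_linear_on_interval eps0 (lam := lam)) => t /andP[t_gt0 t_lt].
  by apply: lin; rewrite gtr0_norm.
move=> phi _ [q [Pq [Y [nY [_ [eps [eps0 coset]]]]]]].
have [lam [lam0 lin]] := generic_curve_reparam_linear x0 Pq nY eps0 coset.
by exists lam; split=> //; exists eps.
Qed.
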